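(* Let $u$ be a one-sided Sturmian sequence, with $(X_u^+,\sigma)$ its associated Sturmian system and left special sequence $l=l_1l_2\dots$, $L_n=l_1\dots l_n$. Then for each $n\ge2$ there are exactly two significant blocks of $\tilde X_u$ of length $n$, namely $0L_{n-1}=0l_1\dots l_{n-1}$ and $1L_{n-1}=1l_1\dots l_{n-1}$.
   Context: A sequence $u\in\{0,1\}^{\mathbb N}$ is Sturmian if for every $n\ge1$ exactly $n+1$ distinct blocks of length $n$ occur in $u$. $X_u^+$ is the closure of $\{\sigma^n u:n\in\mathbb N\}$, $\sigma$ the shift $(\sigma x)_i=x_{i+1}$, and $\tilde X_u=\{x\in\{0,1\}^{\mathbb Z}: x_px_{p+1}\dots\in X_u^+\ \forall p\}$ its natural extension; the languages of $u$, $X_u^+$ and $\tilde X_u$ coincide. For each $n$ there is a unique block $L_n$ of length $n$ with $0L_n$ and $1L_n$ both in the language; these are the prefixes of an infinite sequence $l$ (the left special sequence). For a block $a_{-n}\dots a_0$ in the language, $\mathrm{fol}(a_{-n}\dots a_0)=\{b_0b_1\dots\in X_u^+:\exists b\in\tilde X_u,\ b_{-n}\dots b_0=a_{-n}\dots a_0\}$. A block $a_{-n}\dots a_0$ ($n\ge1$) is significant if $\mathrm{fol}(a_{-n}\dots a_0)\subsetneq\mathrm{fol}(a_{-n+1}\dots a_0)$. *)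

(* Alphabet {0,1} rendered as bool (0 = false, 1 = true). *)
From mathcomp Require Import all_boot all_order all_algebra.
Set Implicit Arguments. Unset Strict Implicit. Unset Printing Implicit Defensive.
Import GRing.Theory Num.Theory.
Local Open Scope ring_scope.

Definition occurs (u : nat -> bool) (w : seq bool) : Prop :=
  exists m : nat, w = mkseq (fun i => u (m + i)%N) (size w).

Definition sturmian (u : nat -> bool) : Prop :=
  forall n : nat, (1 <= n)%N ->
    exists s : seq (seq bool),
      [/\ uniq s, size s = n.+1 &
          forall w, w \in s <-> (size w = n /\ occurs u w)].

(* X_u^+ : closure of the orbit of u in the product topology on {0,1}^N
   (basic open sets are cylinders fixing the first k coordinates). *)
Definition Xplus (u : nat -> bool) (x : nat -> bool) : Prop :=
  forall k : nat, exists m : nat, forall i : nat, (i < k)%N -> x i = u (m + i)%N.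

Definition Xtilde (u : nat -> bool) (x : int -> bool) : Prop :=
  forall p : int, Xplus u (fun i : nat => x (p + i%:Z)).

(* fol(a_{-n} ... a_0) for the block w = [a_{-n}; ...; a_0] (n = size w - 1) *)
Definition fol (u : nat -> bool) (w : seq bool) (y : nat -> bool) : Prop :=
  Xplus u y /\
  exists b : int -> bool,
    [/\ Xtilde u b,
        (forall k : nat, (k < size w)%N ->
           b (k%:Z - (size w).-1%:Z) = nth false w k) &
        (forall i : nat, b i%:Z = y i)].

Definition significant (u : nat -> bool) (w : seq bool) : Prop :=
  [/\ (2 <= size w)%N, occurs u w,
      (forall y, fol u w y -> fol u (behead w) y) &
      exists y, fol u (behead w) y /\ ~ fol u w y].

(* A Sturmian sequence has n + 1 factors of each length n, so it has exactly one left
   special factor of each length, and by the Morse-Hedlund argument it is not eventually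
   periodic; in particular every prefix recurs, which lets any window of u be extended to a
   point of the natural extension.
   If a :: V is significant, a follower of V that does not follow a :: V is preceded, in
   some two-sided sequence, by the other letter; so V is left special and V = L.
   Conversely, non-periodicity gives a word z such that (~ a) L z occurs but a L z does
   not; the future of a two-sided sequence through an occurrence of (~ a) L z follows L
   but not a :: L. *)

From mathcomp Require Import all_boot all_order all_algebra zify boolp.
Set Implicit Arguments. Unset Strict Implicit. Unset Printing Implicit Defensive.
Import GRing.Theory.

Definition words k : seq (seq bool) := [seq val t | t : k.-tuple bool].

Lemma mem_words k w : (w \in words k) = (size w == k).
Proof.
apply/mapP/eqP => [[t _ ->]|sw]; first exact: size_tuple.
by exists (Tuple (introT eqP sw)); rewrite ?mem_enum.
Qed.

Lemma uniq_words k : uniq (words k).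
Proof. by rewrite map_inj_uniq ?enum_uniq //; apply: val_inj. Qed.

Section Language.

Variable v : nat -> bool.

Definition lang k : seq (seq bool) := [seq w <- words k | `[< occurs v w >]].

Lemma mem_lang k w : w \in lang k <-> size w = k /\ occurs v w.
Proof.
rewrite mem_filter mem_words andbC; split.
  by case/andP => /eqP -> /asboolP.
by case=> -> /asboolP ->; rewrite eqxx.
Qed.

Lemma uniq_lang k : uniq (lang k).
Proof. exact/filter_uniq/uniq_words. Qed.

Lemma size_lang0 : size (lang 0) = 1.
Proof.
have nil_lang : [::] \in lang 0 by apply/mem_lang; split => //; exists 0.
have /(uniq_leq_size (uniq_lang 0)) : {subset lang 0 <= [:: [::]]}.
  by move=> w /mem_lang [/size0nil -> _]; rewrite inE.
by case: (lang 0) nil_lang => [|w []].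
Qed.

Definition factor m k := mkseq (fun i => v (m + i)) k.

Lemma size_factor m k : size (factor m k) = k.
Proof. exact: size_mkseq. Qed.

Lemma occurs_factor m k : occurs v (factor m k).
Proof. by exists m; rewrite size_factor. Qed.

Lemma occurs_lang m k : factor m k \in lang k.
Proof. by apply/mem_lang; rewrite size_factor; split => //; apply: occurs_factor. Qed.

Lemma eq_factorP m m' k :
  reflect (forall i, i < k -> v (m + i) = v (m' + i)) (factor m k == factor m' k).
Proof.
apply: (iffP eqP) => [E i ik | E].
  by have := congr1 (nth false ^~ i) E; rewrite !nth_mkseq.
apply: (@eq_from_nth _ false); rewrite !size_factor // => i ik.
by rewrite !nth_mkseq // E.
Qed.

Lemma occursP w :
  occurs v w <-> exists m, forall i, i < size w -> nth false w i = v (m + i).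
Proof.
split=> [[m ->] | [m E]]; exists m.
  by move=> i; rewrite size_mkseq => ik; rewrite nth_mkseq.
by apply: (@eq_from_nth _ false); rewrite ?size_mkseq // => i ik; rewrite nth_mkseq // E.
Qed.

Lemma factorS m k : factor m k.+1 = rcons (factor m k) (v (m + k)).
Proof. exact: mkseqS. Qed.

Lemma take_factor m k N : k <= N -> take k (factor m N) = factor m k.
Proof. by move=> kN; rewrite /factor /mkseq -map_take take_iota (minn_idPl kN). Qed.

Lemma occurs_right_ext w : occurs v w -> exists c, occurs v (rcons w c).
Proof. by case=> m ->; exists (v (m + size w)); rewrite -factorS; apply: occurs_factor. Qed.

Lemma lang_special_count (ext : bool -> seq bool -> seq bool) k (S : seq (seq bool)) :
  (forall b b' w w', ext b w = ext b' w' -> b = b' /\ w = w') ->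
  (forall b w, size (ext b w) = (size w).+1) ->
  (forall w, w \in lang k -> exists c, occurs v (ext c w)) ->
  uniq S ->
  (forall w, w \in S -> [/\ size w = k, occurs v (ext false w) & occurs v (ext true w)]) ->
  size (lang k) + size S <= size (lang k.+1).
Proof.
move=> ext_inj size_ext ext_lang uS special.
pose c w := `[< occurs v (ext true w) >].
have occurs_c w : w \in lang k -> occurs v (ext (c w) w).
  move=> /ext_lang [[] Ht]; first by rewrite /c asboolT.
  by rewrite /c; case: asboolP.
have ext_injr (b : seq bool -> bool) : injective (fun w => ext (b w) w).
  by move=> w w' /ext_inj [].
rewrite -(size_map (fun w => ext (c w) w) (lang k)).
rewrite -(size_map (fun w => ext (~~ c w) w) S) -size_cat.
apply: uniq_leq_size => [|z].
  rewrite cat_uniq !map_inj_uniq ?uniq_lang ?uS ?andbT //; try exact: ext_injr.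
  apply/hasPn => _ /mapP [w _ ->].
  by apply/mapP => -[w' _ /ext_inj [E ww]]; move: E; rewrite ww; case: (c w').
rewrite mem_cat => /orP [] /mapP [w wS ->]; apply/mem_lang; rewrite size_ext.
  by have /mem_lang [sw _] := wS; split; [rewrite sw | apply: occurs_c].
by have [sw Hf Ht] := special _ wS; rewrite sw; split => //; case: (c w).
Qed.

Lemma lang_growth_right_special k x :
  size x = k -> occurs v (rcons x false) -> occurs v (rcons x true) ->
  size (lang k) < size (lang k.+1).
Proof.
move=> sx Hf Ht; rewrite -addn1.
apply: (@lang_special_count (fun b w => rcons w b) k [:: x]).
- by move=> b b' w w' /rcons_inj [-> ->].
- by move=> b w; rewrite size_rcons.
- by move=> w /mem_lang [_ /occurs_right_ext].
- by [].
- by move=> w /[1!inE] /eqP ->.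
Qed.


Definition eventually_periodic := exists i j, i < j /\ forall t, v (i + t) = v (j + t).

Lemma exists_lang_stall E :
  size (lang E) <= E -> exists2 k, k < E & size (lang k.+1) <= size (lang k).
Proof.
move=> small; apply: contrapT => no_stall.
have growth k : k < E -> size (lang k) < size (lang k.+1).
  by move=> kE; rewrite ltnNge; apply/negP => stall; apply: no_stall; exists k.
suff : forall k, k <= E -> k < size (lang k) by move/(_ E (leqnn E)); rewrite ltnNge small.
elim=> [|k IH] kE; first by rewrite size_lang0.
exact: leq_ltn_trans (IH (ltnW kE)) (growth k kE).
Qed.

Lemma exists_repeated_factor k : exists i j, i < j /\ factor i k = factor j k.
Proof.
pose s := [seq factor i k | i <- iota 0 (size (lang k)).+1].
have sub_lang : {subset s <= lang k} by move=> _ /mapP [i _ ->]; apply: occurs_lang.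
have : ~~ uniq s.
  by apply/negP => /uniq_leq_size /(_ sub_lang); rewrite size_map size_iota ltnn.
case/(uniqPn [::]) => i [j [ij]]; rewrite size_map size_iota => jlt.
have ilt := ltn_trans ij jlt.
by rewrite !(nth_map 0) ?size_iota ?nth_iota ?add0n // => E; exists i, j.
Qed.

Lemma eventually_periodic_of_no_right_special k :
  (forall x, size x = k -> occurs v (rcons x false) -> occurs v (rcons x true) -> False) ->
  eventually_periodic.
Proof.
move=> no_special; have [i [j [ij /eqP /eq_factorP Eij]]] := exists_repeated_factor k.
exists i, j; split => //; elim/ltn_ind => t IH.
have [tk | kt] := ltnP t k; first exact: Eij.
pose t' := t - k.
have Et' : factor (i + t') k = factor (j + t') k.
  by apply/eqP/eq_factorP => l lk; rewrite -!addnA IH //; lia.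
have Eit : factor (i + t') k.+1 = rcons (factor (i + t') k) (v (i + t)).
  by rewrite factorS; congr (rcons _ (v _)); lia.
have Ejt : factor (j + t') k.+1 = rcons (factor (i + t') k) (v (j + t)).
  by rewrite factorS Et'; congr (rcons _ (v _)); lia.
have Hi := occurs_factor (i + t') k.+1; have Hj := occurs_factor (j + t') k.+1.
rewrite Eit in Hi; rewrite Ejt in Hj.
apply: contrapT => neq; apply: (no_special (factor (i + t') k)); rewrite ?size_factor //;
  by move: neq Hi Hj; case: (v (i + t)); case: (v (j + t)).
Qed.

Lemma eventually_periodic_of_small_lang E : size (lang E) <= E -> eventually_periodic.
Proof.
move=> /exists_lang_stall [k kE stall].
apply: (eventually_periodic_of_no_right_special (k := k)) => x sx Hf Ht.
by have := lang_growth_right_special sx Hf Ht; rewrite ltnNge stall.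
Qed.

End Language.

Section NaturalExtension.

Variables (u : nat -> bool) (rec : nat -> nat).
Hypothesis rec_gt0 : forall e, 0 < rec e.
Hypothesis rec_prefix : forall e t, t < e -> u (rec e + t) = u t.
Variables M E : nat.
Hypothesis ME : M < E.

(* At stage j the window u[0, span j) stands for the two-sided sequence with position
   [origin j] as 0; the next window contains a copy of it at its recurrence
   [rec (span j)], so the windows grow on both sides and agree where they overlap. *)
Definition stage j : nat * nat :=
  iter j (fun oe => (oe.1 + rec oe.2, rec oe.2 + oe.2 + 1)) (M, E).

Local Notation origin j := (stage j).1.
Local Notation span j := (stage j).2.

Lemma origin_ge j : M + j <= origin j.
Proof. by elim: j => [|j IH] /=; [rewrite addn0 | have := rec_gt0 (span j); lia]. Qed.

Lemma span_origin j : span j = origin j + (E - M) + j.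
Proof. by elim: j => [|j IH] /=; lia. Qed.

Lemma origin_mono j d : origin j <= origin (j + d).
Proof. by elim: d => [|d IH]; rewrite ?addn0 // addnS /=; lia. Qed.

Lemma stage_consistent j d k : k < span j -> u (k + (origin (j + d) - origin j)) = u k.
Proof.
move=> k_span; elim: d => [|d IH]; first by rewrite addn0 subnn addn0.
have := origin_mono j d; have := span_origin j; have := span_origin (j + d).
rewrite addnS /= -IH => sjd sj oj.
rewrite -(rec_prefix (e := span (j + d)) (t := k + (origin (j + d) - origin j))); last lia.
by congr u; lia.
Qed.

(* [i] is read off at stage [absz i], the first whose window is guaranteed to contain it. *)
Definition ext_seq (i : int) : bool := u (absz ((origin (absz i))%:Z + i)%R).

Lemma ext_seq_stage j (i : int) : absz i <= j -> ext_seq i = u (absz ((origin j)%:Z + i)%R).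
Proof.
move=> ij; pose j0 := absz i; pose k := absz ((origin j0)%:Z + i)%R.
have := origin_ge j0; have := span_origin j0; have := origin_mono j0 (j - j0).
rewrite subnKC // => oj sj0 oj0.
have := @stage_consistent j0 (j - j0) k; rewrite subnKC // /ext_seq -/j0 -/k => <-.
  by congr u; lia.
lia.
Qed.

Lemma Xtilde_ext_seq : Xtilde u ext_seq.
Proof.
move=> q K; pose J := (absz q + K)%N.
exists (absz ((origin J)%:Z + q)%R) => i iK /=.
have := origin_ge J; rewrite (ext_seq_stage (j := J)); last lia.
by move=> oJ; congr u; lia.
Qed.

Lemma ext_seq_prefix t : t < E -> ext_seq (t%:Z - M%:Z)%R = u t.
Proof.
move=> tE; pose j0 := absz (t%:Z - M%:Z)%R.
have := @stage_consistent 0 j0 t tE; have := origin_ge j0.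
by rewrite /ext_seq -/j0 add0n => oj0 <-; congr u; rewrite /=; lia.
Qed.

End NaturalExtension.

Definition left_special (u : nat -> bool) (w : seq bool) :=
  occurs u (false :: w) /\ occurs u (true :: w).

Lemma left_special_negb u c w :
  occurs u (~~ c :: w) -> occurs u (c :: w) -> left_special u w.
Proof. by case: c => Hn Hc; split. Qed.

Section Sturmian.

Variable u : nat -> bool.
Hypothesis hu : sturmian u.

Lemma size_lang_sturmian k : 0 < k -> size (lang u k) = k.+1.
Proof.
move=> k_gt0; have [s [us <- Hs]] := hu k_gt0.
apply/eqP; rewrite eqn_leq !uniq_leq_size ?uniq_lang //.
  by move=> w /Hs /mem_lang.
by move=> w /mem_lang /Hs.
Qed.

Lemma sturmian_not_eventually_periodic : ~ eventually_periodic u.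
Proof.
case=> i [j [ij per]]; pose d := j - i; have d_gt0 : 0 < d by rewrite subn_gt0.
have mod_per x : u (i + x) = u (i + x %% d).
  elim/ltn_ind: x => x IH; have [xd | dx] := ltnP x d; first by rewrite modn_small.
  have -> : x = (x - d) + d by rewrite subnK.
  by rewrite modnDr -IH ?[in RHS]per; [congr u; lia | lia].
have : size (lang u j) <= size [seq factor u m j | m <- iota 0 j].
  apply: uniq_leq_size (uniq_lang u j) _ => w /mem_lang [sw [m ->]]; apply/mapP.
  exists (if m < i then m else i + (m - i) %% d).
    rewrite mem_iota add0n; case: ifP => mi; first lia.
    by have := ltn_pmod (m - i) d_gt0; lia.
  rewrite sw; apply/eqP/eq_factorP => l _; case: ifP => // mi.
  have -> : m + l = i + (m - i + l) by lia.
  by rewrite mod_per -addnA [in RHS]mod_per modnDml.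
by rewrite size_lang_sturmian ?size_map ?size_iota ?ltnn //; lia.
Qed.

Lemma sturmian_prefix_recurs e : exists2 p, 0 < p & factor u p e = factor u 0 e.
Proof.
(* Otherwise the shift of u misses that prefix, so it has at most e factors of length e. *)
apply: contrapT => no_return.
pose v i := u i.+1.
have factor_v m k : factor v m k = factor u m.+1 k by apply: eq_mkseq => i; rewrite /v addSn.
suff /eventually_periodic_of_small_lang : size (lang v e) <= e.
  by case=> i [j [ij per]]; apply: sturmian_not_eventually_periodic; exists i.+1, j.+1.
case: e no_return => [|e] no_return; first by exfalso; apply: no_return; exists 1.
suff : size (factor u 0 e.+1 :: lang v e.+1) <= size (lang u e.+1).
  by rewrite size_lang_sturmian.
apply: uniq_leq_size => [|w].
  rewrite /= uniq_lang andbT; apply/negP => /mem_lang [_ [m]].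
  rewrite size_factor -[mkseq _ _]/(factor v m e.+1) factor_v => E.
  by apply: no_return; exists m.+1.
rewrite inE => /orP [/eqP -> | /mem_lang [sw [m Ew]]]; first exact: occurs_lang.
by apply/mem_lang; split => //; exists m.+1.
Qed.

Lemma sturmian_later_occurrence m k : exists2 m', m < m' & factor u m' k = factor u m k.
Proof.
have [p p_gt0 /eqP /eq_factorP Ep] := sturmian_prefix_recurs (m + k).
exists (p + m); first by lia.
by apply/eqP/eq_factorP => i ik; rewrite -addnA Ep //; lia.
Qed.

Lemma sturmian_left_ext w : occurs u w -> exists c, occurs u (c :: w).
Proof.
move=> /occursP [m Ew].
have [m' mm' /eqP /eq_factorP Em'] := sturmian_later_occurrence m (size w).
exists (u m'.-1); apply/occursP; exists m'.-1 => -[|i] /= iw; first by rewrite addn0.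
by rewrite Ew // -Em' //; congr u; lia.
Qed.

Lemma sturmian_left_special_unique V1 V2 :
  size V1 = size V2 -> left_special u V1 -> left_special u V2 -> V1 = V2.
Proof.
move=> sV [Hf1 Ht1] [Hf2 Ht2]; apply: contrapT => neqV.
case sV1 : (size V1) => [|k].
  by apply: neqV; rewrite (size0nil sV1) (size0nil (etrans (esym sV) sV1)).
suff : size (lang u k.+1) + size [:: V1; V2] <= size (lang u k.+2).
  by rewrite !size_lang_sturmian // addn2 ltnn.
apply: (@lang_special_count u cons).
- by move=> b b' w w' [].
- by [].
- by move=> w /mem_lang [_ /sturmian_left_ext].
- by rewrite /= inE andbT; apply/eqP.
- by move=> w /[!inE] /orP [] /eqP ->; split => //; rewrite -sV.
Qed.

Lemma sturmian_separating_ext a L : left_special u L ->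
  exists z, occurs u (~~ a :: L ++ z) /\ ~ occurs u (a :: L ++ z).
Proof.
(* Otherwise every right extension of (~~ a) :: L is left special, so by uniqueness two
   occurrences of (~~ a) :: L are followed by the same infinite word. *)
move=> lsL; apply: contrapT => /forallNP no_sep.
have ext_left_special z : occurs u (~~ a :: L ++ z) -> left_special u (L ++ z).
  by move=> H; apply: (left_special_negb H); apply: contrapT => H'; apply: (no_sep z).
have [m Em] : occurs u (~~ a :: L) by case: (~~ a) lsL => -[].
have [m' mm' Em'] := sturmian_later_occurrence m (size L).+1.
apply: sturmian_not_eventually_periodic; exists m, m'; split => // t.
pose N := (size L).+1 + t.+1.
have split_factor m1 : factor u m1 (size L).+1 = ~~ a :: L ->
    factor u m1 N = ~~ a :: L ++ drop (size L).+1 (factor u m1 N).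
  move=> E1; rewrite -{1}(cat_take_drop (size L).+1 (factor u m1 N)) take_factor ?E1 //.
  by rewrite /N leq_addr.
have Fm := split_factor m (esym Em); have Fm' := split_factor m' (etrans Em' (esym Em)).
have /(congr1 (cons (~~ a))) :
    L ++ drop (size L).+1 (factor u m N) = L ++ drop (size L).+1 (factor u m' N).
  apply: sturmian_left_special_unique; first by rewrite !size_cat !size_drop !size_factor.
    by apply: ext_left_special; rewrite -Fm; apply: occurs_factor.
  by apply: ext_left_special; rewrite -Fm'; apply: occurs_factor.
rewrite -Fm -Fm' => /eqP /eq_factorP; apply; rewrite /N; lia.
Qed.

Lemma sturmian_Xtilde_extends M E :
  exists b, Xtilde u b /\ forall t, t < E -> b (t%:Z - M%:Z)%R = u t.
Proof.
have ex_rec e : exists p, (0 < p) && (factor u p e == factor u 0 e).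
  by have [p p_gt0 Ep] := sturmian_prefix_recurs e; exists p; rewrite p_gt0 Ep eqxx.
pose rec e := xchoose (ex_rec e).
have rec_gt0 e : 0 < rec e by have /andP [] := xchooseP (ex_rec e).
have rec_prefix e t : t < e -> u (rec e + t) = u t.
  by have /andP [_ /eq_factorP Ep] := xchooseP (ex_rec e); apply: Ep.
have ME : M < maxn E M.+1 by rewrite leq_max leqnn orbT.
exists (ext_seq u rec M (maxn E M.+1)); split; first exact: Xtilde_ext_seq.
by move=> t tE; apply: ext_seq_prefix => //; rewrite leq_max tE.
Qed.

End Sturmian.

Section Followers.

Variable u : nat -> bool.

Lemma Xplus_Xtilde b : Xtilde u b -> Xplus u (fun i => b i%:Z%R).
Proof. by move=> /(_ 0%R) /=; under eq_fun do rewrite add0r. Qed.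

Lemma occurs_Xtilde b q K : Xtilde u b -> occurs u (mkseq (fun i => b (q + i%:Z)%R) K).
Proof.
move=> /(_ q K) [m Em]; apply/occursP; exists m => i; rewrite size_mkseq => iK.
by rewrite nth_mkseq // Em.
Qed.

Lemma fol_behead w y : fol u w y -> fol u (behead w) y.
Proof.
case: w => [|a w] //= [Xy [b [Xb bw by_]]]; split => //; exists b; split => // k kw.
by have := bw k.+1; rewrite /= ltnS => /(_ kw) <-; congr b; lia.
Qed.

Lemma fol_left_ext w y : fol u w y -> exists c, occurs u (c :: w) /\ fol u (c :: w) y.
Proof.
move=> [Xy [b [Xb bw by_]]]; exists (b (- (size w)%:Z)%R).
have bcw k : k < (size w).+1 ->
    b (k%:Z - (size w)%:Z)%R = nth false (b (- (size w)%:Z)%R :: w) k.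
  case: k => [|k] /= kw; first by congr b; lia.
  by rewrite -bw //; congr b; lia.
split; last by split => //; exists b.
have := occurs_Xtilde (- (size w)%:Z)%R (size w).+1 Xb; congr occurs.
apply: (@eq_from_nth _ false); rewrite size_mkseq // => k kw.
by rewrite nth_mkseq // -bcw //; congr b; lia.
Qed.

Lemma occurs_fol_cat w y K :
  0 < size w -> fol u w y -> occurs u (w ++ mkseq (fun i => y i.+1) K).
Proof.
move=> w_gt0 [Xy [b [Xb bw by_]]].
have := occurs_Xtilde (- (size w).-1%:Z)%R (size w + K) Xb; congr occurs.
apply: (@eq_from_nth _ false); rewrite size_mkseq ?size_cat ?size_mkseq // => k kwK.
rewrite nth_mkseq // nth_cat; case: ltnP => kw.
  by rewrite -bw //; congr b; lia.
rewrite nth_mkseq; last lia.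
by rewrite -by_; congr b; lia.
Qed.

End Followers.

Lemma significant_left_special u w : significant u w -> left_special u (behead w).
Proof.
case: w => [|a w] [_ occ_aw _ [y [fol_w not_fol_aw]]] //=.
have [c [occ_cw fol_cw]] := fol_left_ext fol_w.
case: a c occ_aw not_fol_aw occ_cw fol_cw {fol_w} => -[] occ_aw not_fol_aw occ_cw fol_cw //;
  by [case: (not_fol_aw fol_cw) | split].
Qed.

Lemma significant_of_left_special u a L :
  sturmian u -> 0 < size L -> left_special u L -> significant u (a :: L).
Proof.
move=> hu L_gt0 lsL; split => //=; first by case: a lsL => -[].
  by move=> y /fol_behead.
have [z [/occursP [m0 Em0] not_occ_z]] := sturmian_separating_ext hu a lsL.
pose M := m0 + size L.
have [b [Xb bu]] := sturmian_Xtilde_extends hu M (M.+1 + size z).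
have b_L k : k < size L -> b (k%:Z - (size L).-1%:Z)%R = nth false L k.
  move=> kL; have := Em0 k.+1; rewrite /= nth_cat kL size_cat => -> //; last lia.
  by rewrite -bu; [congr b; rewrite /M; lia | rewrite /M; lia].
have b_z i : i < size z -> b i.+1%:Z%R = nth false z i.
  move=> iz; have := Em0 (size L + i).+1.
  rewrite /= nth_cat (ltnNge (size L + i)) leq_addr /= addKn size_cat => -> //; last lia.
  by rewrite -bu; [congr b; rewrite /M; lia | rewrite /M; lia].
exists (fun i => b i%:Z%R); split.
  by split; [exact: Xplus_Xtilde | exists b].
move=> fol_aL; apply: not_occ_z.
have := occurs_fol_cat (size z) (ltn0Sn (size L) : 0 < size (a :: L)) fol_aL.
congr (occurs _ (_ :: L ++ _)).
apply: (@eq_from_nth _ false); rewrite size_mkseq // => i iz.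
by rewrite nth_mkseq // b_z.
Qed.

Theorem proposition4p7 (u : nat -> bool) (hu : sturmian u) (n : nat) (hn : (2 <= n)%N) :
  forall L : seq bool,
    size L = n.-1 -> occurs u (false :: L) -> occurs u (true :: L) ->
    forall w : seq bool, size w = n ->
      (significant u w <-> (w = false :: L \/ w = true :: L)).
Proof.
move=> L sL occ0 occ1 w sw; split.
  case: w sw => [|a V] sw /significant_left_special /= lsV; first by move: hn; rewrite -sw.
  have -> : V = L by apply: (sturmian_left_special_unique hu) => //; rewrite sL -sw.
  by case: a {sw}; [right | left].
have L_gt0 : 0 < size L by rewrite sL -ltnS prednK // ltnW.
by case=> ->; apply: significant_of_left_special.
Qed.
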